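(* There exists an absolute constant $C$ such that the following holds. Let $G$ be a graph on $n$ vertices, let $0<\delta\le 1/2$, and let $s,m,b$ be positive integers with $m\le b\le \delta s$. Let $\mathcal{S}^+(s,m,b)$ be the collection of all ordered pairs $(S,F)$ where $S\in\mathcal{S}(s,m,b)$ and $F$ is a set of $m-1$ unordered pairs of vertices of $S$ such that adding the pairs in $F$ as edges to $G[S]$ yields a connected graph. Then $$|\mathcal{S}^+(s,m,b)|\le n^m\exp\big(C\delta\log(1/\delta)\,s\big).$$
   Context: $\mathcal{S}(s,m,b)$ is the collection of all sets $S\subseteq V(G)$ with $|S|=s$ such that $G[S]$ has exactly $m$ connected components $S_1,\dots,S_m$ and $\sum_{i=1}^m|N_G(S_i)|=b$, where $N_G(A)$ is the set of vertices in $V(G)\setminus A$ having a neighbor in $A$ and $G[S]$ is the induced subgraph. *)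

From mathcomp Require Import all_boot.
Set Implicit Arguments. Unset Strict Implicit. Unset Printing Implicit Defensive.

Section Graphs.
Variable T : finType.
(* a simple graph on T : symmetric, irreflexive adjacency relation e *)
Variable e : rel T.

Definition induced_rel (S : {set T}) : rel T :=
  fun x y => [&& x \in S, y \in S & e x y].

Definition comp_of (S : {set T}) (x : T) : {set T} :=
  [set y in S | connect (induced_rel S) x y].

Definition components (S : {set T}) : {set {set T}} :=
  [set comp_of S x | x in S].

Definition nbhd (A : {set T}) : {set T} :=
  [set v | (v \notin A) && [exists u in A, e u v]].

Definition inSsmb (s m b : nat) (S : {set T}) : bool :=
  [&& #|S| == s, #|components S| == m &
      \sum_(C in components S) #|nbhd C| == b].

Definition aug_rel (S : {set T}) (F : {set {set T}}) : rel T :=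
  fun x y => induced_rel S x y || [&& x \in S, y \in S & [set x; y] \in F].

Definition inSplus (s m b : nat) (p : {set T} * {set {set T}}) : bool :=
  let: (S0, F0) := p in
  [&& inSsmb s m b S0,
      #|F0| == m.-1,
      [forall f in F0, (#|f| == 2) && (f \subset S0)] &
      [forall x in S0, forall y in S0, connect (aug_rel S0 F0) x y]].

Definition Splus (s m b : nat) : {set {set T} * {set {set T}}} :=
  [set p | inSplus s m b p].

End Graphs.

(* Let N = |S^+(s,m,b)| and n = |V(G)|.  The proof has a combinatorial and an
   analytic half.

   Each S in S(s,m,b) is determined by a set R of at most m
   roots (one per component of G[S]) together with the way S is grown from R:
   exploring boundary vertices one at a time, each is either added to S (s - |R|
   times) or declared a boundary vertex (at most b times), so there are at most
   binomial(s+b, b) ways to grow S from R ([card_grown]).  Adding the m-1 pairs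
   of F gives N <= (sum_{j<=m} binomial(n,j)) binomial(s+b,b) binomial(binomial(s,2), m-1).
   Clearing factorials, with m = j+1 <= n:
       N (j!)^2 b! <= (m+1) n^m s^j s^j (s+b)^b        ([card_Splus_scaled]).

   Each power x^k is at most k! (1/delta)^k exp(delta x); the
   remaining factors (m+1) (1/delta)^(2j+b) exp(delta(3s+b)) are at most
   exp(13 delta ln(1/delta) s) because m <= b <= delta s and ln(1/delta) >= 1/2
   ([real_bound]).  Hence the theorem holds with C = 13. *)
From mathcomp Require Import all_boot.
From Stdlib Require Import Reals.
From Stdlib Require Import Lra Lia Factorial.
From mathcomp Require Import zify.

Section RealEstimates.
Local Open Scope R_scope.

(* One term of the exponential series: x^k / k! <= exp x for x >= 0. *)
Lemma exp_ge_pow_div_fact x k : 0 <= x -> x ^ k / INR (fact k) <= exp x.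
Proof.
intros hx.
set (u := fun i => / INR (fact i) * x ^ i).
assert (u_nonneg : forall i, 0 <= u i).
{ intros i; apply Rmult_le_pos; [|now apply pow_le].
  left; apply Rinv_0_lt_compat, INR_fact_lt_0. }
unfold exp; destruct (exist_exp x) as [l cv]; simpl.
assert (grow : Un_growing (fun n => sum_f_R0 u n)).
{ intros n; simpl; specialize (u_nonneg (S n)); lra. }
apply Rle_trans with (sum_f_R0 u k); [|exact (growing_ineq _ l grow cv k)].
destruct k as [|k]; [unfold u; simpl; unfold Rdiv; rewrite !Rinv_1; lra|].
assert (last_term : u (S k) = x ^ S k / INR (fact (S k))) by (unfold u, Rdiv; ring).
rewrite tech5 -last_term; pose proof (cond_pos_sum u k u_nonneg); lra.
Qed.

Lemma pow_le_fact_exp x d k : 0 <= x -> 0 < d ->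
  x ^ k <= INR (fact k) * ((1 / d) ^ k * exp (d * x)).
Proof.
intros hx hd.
pose proof (INR_fact_lt_0 k) as hf.
assert (rescale : x ^ k = (1 / d) ^ k * (d * x) ^ k).
{ rewrite -Rpow_mult_distr; f_equal; field; lra. }
assert (hdk : 0 <= (1 / d) ^ k) by (apply pow_le; left; apply Rdiv_lt_0_compat; lra).
assert (bound : (d * x) ^ k <= INR (fact k) * exp (d * x)).
{ pose proof (exp_ge_pow_div_fact (d * x) k ltac:(nra)) as series_term.
  replace ((d * x) ^ k) with (INR (fact k) * ((d * x) ^ k / INR (fact k))) by (field; lra).
  apply Rmult_le_compat_l; lra. }
rewrite rescale; nra.
Qed.

Lemma exp_le_mono x y : x <= y -> exp x <= exp y.
Proof.
intros h; destruct (Rle_lt_or_eq_dec x y h) as [lt|equal].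
- left; now apply exp_increasing.
- rewrite equal; lra.
Qed.

Lemma inv_ge_two d : 0 < d -> d <= 1 / 2 -> 2 <= 1 / d.
Proof. intros hd hd2; apply (Rmult_le_reg_r d); [lra|]; field_simplify; lra. Qed.

(* For delta <= 1/2 the entropy factor ln(1/delta) is at least ln 2 > 1/2. *)
Lemma ln_inv_ge_half d : 0 < d -> d <= 1 / 2 -> 1 / 2 <= ln (1 / d).
Proof.
intros hd hd2; pose proof ln_lt_2.
destruct (Rle_lt_or_eq_dec _ _ (inv_ge_two d hd hd2)) as [lt|equal].
- pose proof (ln_increasing 2 (1 / d) ltac:(lra) lt); lra.
- rewrite -equal; lra.
Qed.

Lemma pow_as_exp x k : 0 < x -> x ^ k = exp (INR k * ln x).
Proof. by intros hx; rewrite -ln_pow // exp_ln //; apply: pow_lt. Qed.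

(* The collected error factors: m + 1 <= e^m, (1/delta)^(2j+b) <= (1/delta)^(3b)
   and the exponential terms all fit in exp(13 delta ln(1/delta) s),
   using m = j + 1 <= b <= delta s and ln(1/delta) >= 1/2. *)
Lemma error_factor_bound (j b : nat) d s :
  0 < d -> d <= 1 / 2 -> (S j <= b)%nat -> INR b <= d * s ->
  INR (S (S j)) * ((1 / d) ^ (j + j + b) * exp (d * (3 * s + INR b)))
    <= exp (13 * d * ln (1 / d) * s).
Proof.
intros hd hd2 hjb hbs.
set (L := ln (1 / d)).
assert (hL : 1 / 2 <= L) by (apply ln_inv_ge_half; lra).
assert (hm : INR (S (S j)) <= exp (INR (S j))).
{ rewrite (S_INR (S j)) Rplus_comm; apply exp_ineq1_le. }
assert (hpow : (1 / d) ^ (j + j + b) <= exp (INR (3 * b) * L)).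
{ unfold L; rewrite -pow_as_exp; last by apply: Rdiv_lt_0_compat; lra.
  apply Rle_pow; [pose proof (inv_ge_two d hd hd2); lra|lia]. }
assert (hmb : INR (S j) <= INR b) by (apply le_INR; lia).
assert (hb0 : 0 <= INR b) by apply pos_INR.
assert (hs : 0 <= s) by nra.
assert (hsum : INR (S j) + INR (3 * b) * L + d * (3 * s + INR b) <= 13 * d * L * s).
{ rewrite mult_INR; simpl (INR 3); nra. }
eapply Rle_trans; [|apply exp_le_mono, hsum].
rewrite !exp_plus Rmult_assoc.
pose proof (exp_pos (d * (3 * s + INR b))).
apply Rmult_le_compat; [apply pos_INR| |exact hm|].
- apply Rmult_le_pos; [apply pow_le; left; apply Rdiv_lt_0_compat|]; lra.
- apply Rmult_le_compat_r; [lra|exact hpow].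
Qed.

Lemma three_powers_le s d (j b : nat) : 0 <= s -> 0 < d ->
  s ^ j * s ^ j * (s + INR b) ^ b
    <= INR (fact j) * INR (fact j) * INR (fact b)
       * ((1 / d) ^ (j + j + b) * exp (d * (3 * s + INR b))).
Proof.
intros hs hd.
pose proof (pow_le_fact_exp s d j hs hd) as hj.
pose proof (pow_le_fact_exp (s + INR b) d b ltac:(pose proof (pos_INR b); lra) hd) as hb.
assert (merge : INR (fact j) * ((1 / d) ^ j * exp (d * s))
              * (INR (fact j) * ((1 / d) ^ j * exp (d * s)))
              * (INR (fact b) * ((1 / d) ^ b * exp (d * (s + INR b))))
          = INR (fact j) * INR (fact j) * INR (fact b)
            * ((1 / d) ^ (j + j + b) * exp (d * (3 * s + INR b)))).
{ rewrite !pow_add; replace (d * (3 * s + INR b)) with (d * s + d * s + d * (s + INR b)) by ring.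
  rewrite !exp_plus; ring. }
rewrite -merge.
pose proof (pow_le s j hs).
apply Rmult_le_compat; [nra|apply pow_le; pose proof (pos_INR b); lra| |exact hb].
apply Rmult_le_compat; lra.
Qed.

Lemma real_bound N n s d (j b : nat) :
  0 < d -> d <= 1 / 2 -> 0 <= n -> (S j <= b)%nat -> INR b <= d * s ->
  N * (INR (fact j) * INR (fact j) * INR (fact b))
    <= INR (S (S j)) * n ^ S j * (s ^ j * s ^ j * (s + INR b) ^ b) ->
  N <= n ^ S j * exp (13 * d * ln (1 / d) * s).
Proof.
intros hd hd2 hn hjb hbs hN.
assert (hs : 0 <= s).
{ pose proof (le_INR 1 b ltac:(lia)) as hb1; simpl in hb1.
  left; apply (Rmult_lt_reg_l d); lra. }
set (F := INR (fact j) * INR (fact j) * INR (fact b)) in *.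
set (E := (1 / d) ^ (j + j + b) * exp (d * (3 * s + INR b))).
assert (hF : 0 < F) by (unfold F; repeat apply Rmult_lt_0_compat; apply INR_fact_lt_0).
assert (hc : 0 <= INR (S (S j)) * n ^ S j) by (apply Rmult_le_pos; [apply pos_INR|now apply pow_le]).
pose proof (three_powers_le s d j b hs hd) as hpow; fold F E in hpow.
assert (hNE : N <= n ^ S j * (INR (S (S j)) * E)).
{ apply (Rmult_le_reg_r F); [exact hF|].
  apply Rle_trans with (1 := hN).
  replace (n ^ S j * (INR (S (S j)) * E) * F) with (INR (S (S j)) * n ^ S j * (F * E)) by ring.
  now apply Rmult_le_compat_l. }
apply Rle_trans with (1 := hNE), Rmult_le_compat_l; [now apply pow_le|].
now apply error_factor_bound.
Qed.

End RealEstimates.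

(* Re-import ssrnat: the Stdlib imports above shadow its notation for expn. *)
From mathcomp Require Import ssrnat.
Set Implicit Arguments. Unset Strict Implicit. Unset Printing Implicit Defensive.

Lemma card_bigcup_le (I T : finType) (P : pred I) (F : I -> {set T}) :
  #|\bigcup_(i | P i) F i| <= \sum_(i | P i) #|F i|.
Proof.
elim/big_ind2: _ => [|A1 n1 A2 n2 h1 h2|//]; first by rewrite cards0.
exact: leq_trans (leq_card_setU _ _) (leq_add h1 h2).
Qed.

Section Growth.
Variables (T : finType) (e : rel T).

(* [grown R X a k] is the family of vertex sets A that are grown from the
   root set R by adding a further vertices, so that every vertex of A is
   reachable from R inside G[A], whose boundary contains the forbidden set X
   and has at most k vertices besides X. *)
Definition grown_from (R X : {set T}) (a k : nat) (A : {set T}) : bool :=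
  [&& R \subset A, [disjoint A & X], X \subset nbhd e A,
      #|A| == #|R| + a, #|nbhd e A| <= #|X| + k &
      [forall y in A, [exists r in R, connect (induced_rel e A) r y]]].

Definition grown (R X : {set T}) (a k : nat) : {set {set T}} :=
  [set A | grown_from R X a k A].

(* Nothing grows from R through a boundary that is entirely forbidden:
   a path in G[A] leaving R would have to cross N(R), which lies in X. *)
Lemma reach_stays_in_roots (R X A : {set T}) r y :
  [disjoint A & X] -> nbhd e R \subset X ->
  r \in R -> connect (induced_rel e A) r y -> y \in R.
Proof.
move=> dAX sRX + /connectP[p pth ->].
elim: p r pth => [|z p IH] r //= /andP[/and3P[_ zA erz] pth] rR.
apply: IH pth _; apply: contraT => zR.
have zX : z \in X by apply: (subsetP sRX); rewrite inE zR; apply/existsP; exists r; rewrite rR.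
by rewrite (disjointFr dAX zA) in zX.
Qed.

Lemma grown0_sub (R X : {set T}) k : grown R X 0 k \subset [set R].
Proof.
apply/subsetP => A; rewrite !inE => /and5P[sRA _ _ /eqP cA _].
by rewrite eq_sym eqEcard sRA cA addn0 /=.
Qed.

Lemma grown_closed_sub (R X : {set T}) a k :
  nbhd e R \subset X -> grown R X a k \subset [set R].
Proof.
move=> sRX; apply/subsetP => A; rewrite !inE => /and5P[sRA dAX _ _ /andP[_ reach]].
rewrite eq_sym eqEsubset sRA /=; apply/subsetP => y yA.
have /existsP[r /andP[rR ry]] := implyP (forallP reach y) yA.
exact: reach_stays_in_roots dAX sRX rR ry.
Qed.

(* Either u is
   in A (and A grows from u |: R with one fewer vertex to add), or u is a
   boundary vertex of A (and A grows from R with u forbidden, which uses up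
   one unit of the boundary budget k). *)
Lemma grown_split (R X : {set T}) a k u A :
  u \in nbhd e R -> u \notin X -> A \in grown R X a.+1 k ->
  (A \in grown (u |: R) X a k) ||
  (0 < k) && (A \in grown R (u |: X) a.+1 k.-1).
Proof.
rewrite inE => /andP[uR /existsP[r /andP[rR eru]]] uX.
rewrite !inE => /and5P[sRA dAX sXN /eqP cA /andP[cN reach]].
case uA: (u \in A) => /=.
  have cuR : #|A| == #|u |: R| + a by rewrite cardsU1 uR cA addnS.
  rewrite /grown_from subUset sub1set uA sRA dAX sXN cuR cN /=; apply/orP; left.
  apply/forallP => y; apply/implyP => yA.
  have /existsP[r' /andP[r'R ry]] := implyP (forallP reach y) yA.
  by apply/existsP; exists r'; rewrite inE r'R orbT.
have uN : u \in nbhd e A.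
  by rewrite inE uA; apply/existsP; exists r; rewrite (subsetP sRA _ rR).
have suXN : u |: X \subset nbhd e A by rewrite subUset sub1set uN sXN.
have cuX : #|u |: X| = #|X|.+1 by rewrite cardsU1 uX.
have k_gt0 : 0 < k.
  by have := leq_trans (subset_leq_card suXN) cN; rewrite cuX -addn1 leq_add2l.
have dAuX : [disjoint A & u |: X].
  rewrite disjoints_subset; apply/subsetP => z zA; rewrite !inE negb_or (disjointFr dAX zA) andbT.
  by apply: contraTneq zA => ->; rewrite uA.
have cNu : #|nbhd e A| <= #|u |: X| + k.-1 by rewrite cuX addSnnS prednK.
apply/orP; right; rewrite k_gt0 /grown_from sRA dAuX suXN cA eqxx cNu.
exact: reach.
Qed.

(* The number of sets grown from R with a added vertices and boundary budget
   k is at most binomial(a + k, a): each branching step decreases a or k. *)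
Lemma card_grown (R X : {set T}) a k : #|grown R X a k| <= 'C(a + k, a).
Proof.
have single R' X' a' k' n : a' <= n -> grown R' X' a' k' \subset [set R'] ->
    #|grown R' X' a' k'| <= 'C(n, a').
  by move=> le_an sub; rewrite (leq_trans (subset_leq_card sub)) // cards1 bin_gt0.
move def_n: (a + k) => n; elim: n => [|n IH] in R X a k def_n *.
  by move: def_n => /eqP; rewrite addn_eq0 => /andP[/eqP-> _]; apply/single/grown0_sub.
case: a def_n => [|a] def_n; first exact/single/grown0_sub.
have le_an : a.+1 <= n.+1 by rewrite -def_n leq_addr.
case: (pickP [pred u in nbhd e R :\: X]) => [u /=|none]; last first.
  apply/single/grown_closed_sub/subsetP => // z zN; apply: contraT => zX.
  by have := none z; rewrite /= in_setD zX zN.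
rewrite in_setD => /andP[uX uR].
have IHadd : #|grown (u |: R) X a k| <= 'C(n, a).
  by apply: IH; move: def_n; rewrite addSn => -[].
rewrite binS addnC; case: k => [|k] in def_n IHadd *.
  apply: leq_trans (leq_addr _ _); apply: leq_trans IHadd; apply: subset_leq_card.
  by apply/subsetP => A /(grown_split uR uX)/orP[|].
apply: leq_trans (_ : #|grown (u |: R) X a k.+1| + #|grown R (u |: X) a.+1 k| <= _).
  apply: leq_trans (leq_card_setU _ _); apply: subset_leq_card.
  by apply/subsetP => A /(grown_split uR uX)/orP[H|/andP[_ H]]; rewrite inE H ?orbT.
by rewrite (leq_add IHadd) // IH // addSnnS; move: def_n; rewrite addSn => -[].
Qed.

End Growth.

Section Roots.
Variables (T : finType) (e : rel T).
Hypothesis e_sym : symmetric e.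

Lemma induced_sym (S : {set T}) : symmetric (induced_rel e S).
Proof. by move=> x y; rewrite /induced_rel e_sym andbCA. Qed.

Definition pick_set (C : {set T}) : {set T} :=
  if [pick y in C] is Some y then [set y] else set0.

Definition roots (S : {set T}) : {set T} :=
  \bigcup_(C in components e S) pick_set C.

Lemma card_roots (S : {set T}) : #|roots S| <= #|components e S|.
Proof.
apply: leq_trans (card_bigcup_le _ _) _; rewrite -sum1_card; apply: leq_sum => C _.
by rewrite /pick_set; case: pickP => [y _|_]; rewrite ?cards1 ?cards0.
Qed.

Lemma comp_of_sub (S : {set T}) x : comp_of e S x \subset S.
Proof. by apply/subsetP => y; rewrite inE => /andP[]. Qed.

Lemma roots_sub (S : {set T}) : roots S \subset S.
Proof.
apply/bigcupsP => _ /imsetP[x _ ->]; rewrite /pick_set.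
case: pickP => [y yC|_]; last exact: sub0set.
by rewrite sub1set (subsetP (comp_of_sub S x)).
Qed.

Lemma roots_reach (S : {set T}) y :
  y \in S -> exists2 r, r \in roots S & connect (induced_rel e S) r y.
Proof.
move=> yS; set C := comp_of e S y.
have CS : C \in components e S by apply/imsetP; exists y.
have yC : y \in C by rewrite inE yS connect0.
case Hp: [pick z in C] => [r|]; last by move: Hp; case: pickP => // /(_ y); rewrite yC.
have := Hp; case: pickP => // r' + [eq_r']; rewrite eq_r' inE => /andP[_ yr].
exists r; first by apply/bigcupP; exists C => //; rewrite /pick_set Hp set11.
by rewrite (sym_connect_sym (induced_sym S)).
Qed.

Lemma card_nbhd_le_sum (S : {set T}) :
  #|nbhd e S| <= \sum_(C in components e S) #|nbhd e C|.
Proof.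
apply: leq_trans (card_bigcup_le _ _); apply/subset_leq_card/subsetP => v.
rewrite inE => /andP[vS /existsP[u /andP[uS euv]]].
apply/bigcupP; exists (comp_of e S u); first by apply/imsetP; exists u.
rewrite inE (contra (subsetP (comp_of_sub S u) v) vS) /=.
by apply/existsP; exists u; rewrite inE uS connect0.
Qed.

Lemma Ssmb_grown s m b (S : {set T}) : inSsmb e s m b S ->
  S \in \bigcup_(R : {set T} | #|R| <= m) grown e R set0 (s - #|R|) b.
Proof.
case/and3P => /eqP cS /eqP cC /eqP sN.
apply/bigcupP; exists (roots S); first by rewrite -cC card_roots.
have rS := roots_sub S.
rewrite inE /grown_from rS disjoints_subset setC0 subsetT sub0set /=.
rewrite subnKC -?cS ?subset_leq_card // eqxx cards0 add0n -sN card_nbhd_le_sum /=.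
apply/forallP => y; apply/implyP => yS.
by have [r rR ry] := roots_reach yS; apply/existsP; exists r; rewrite rR.
Qed.

(* Choose at most m roots, then grow S from them. *)
Lemma card_Ssmb s m b :
  #|[set S | inSsmb e s m b S]| <= (\sum_(j < m.+1) 'C(#|T|, j)) * 'C(s + b, b).
Proof.
set small := [set R : {set T} | #|R| <= m].
have card_small : #|small| <= \sum_(j < m.+1) 'C(#|T|, j).
  apply: leq_trans (_ : #|\bigcup_(j < m.+1) [set R : {set T} | #|R| == j]| <= _).
    apply/subset_leq_card/subsetP => R; rewrite inE => Rm.
    by apply/bigcupP; exists (Ordinal (Rm : #|R| < m.+1)); rewrite ?inE.
  by apply: leq_trans (card_bigcup_le _ _) _; apply: leq_sum => j _; rewrite card_draws.
apply: leq_trans (_ : #|\bigcup_(R : {set T} | #|R| <= m) grown e R set0 (s - #|R|) b| <= _).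
  by apply/subset_leq_card/subsetP => S; rewrite inE; apply: Ssmb_grown.
apply: leq_trans (card_bigcup_le _ _) _.
apply: leq_trans (_ : \sum_(R : {set T} | #|R| <= m) 'C(s + b, b) <= _).
  apply: leq_sum => R _; apply: leq_trans (card_grown e R set0 _ _) _.
  rewrite -(bin_sub (leq_addr b (s - #|R|))) addKn.
  by apply: leq_bin2l; rewrite leq_add2r leq_subr.
by rewrite sum_nat_const leq_mul2r -[X in X <= _](cardsE) card_small orbT.
Qed.

End Roots.

Section Augmentations.
Variables (T : finType) (e : rel T).

Definition pair_sets (k : nat) (S : {set T}) : {set {set {set T}}} :=
  [set F : {set {set T}} | F \subset [set f : {set T} | f \subset S & #|f| == 2]
                         & #|F| == k].

Lemma card_Splus_le s m b :
  #|Splus e s m b| <= #|[set S | inSsmb e s m b S]| * 'C('C(s, 2), m.-1).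
Proof.
apply: leq_trans (_ : #|\bigcup_(S in [set S | inSsmb e s m b S])
                         [set (S, F) | F in pair_sets m.-1 S]| <= _).
  apply/subset_leq_card/subsetP => -[S F]; rewrite inE => /and4P[hS /eqP cF hF _].
  apply/bigcupP; exists S; first by rewrite inE.
  apply/imsetP; exists F => //; rewrite inE cF eqxx andbT.
  apply/subsetP => f fF; have /andP[c2 sub] := implyP (forallP hF f) fF.
  by rewrite inE sub c2.
apply: leq_trans (card_bigcup_le _ _) _.
rewrite -sum_nat_const; apply: leq_sum => S; rewrite inE => /and3P[/eqP cS _ _].
by apply: leq_trans (leq_imset_card _ _) _; rewrite cards_draws cards_draws cS.
Qed.

Lemma Splus_size s m b : 0 < #|Splus e s m b| -> s <= #|T|.
Proof.
case/card_gt0P => -[S F]; rewrite inE => /and4P[/and3P[/eqP <- _ _] _ _ _].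
exact: max_card.
Qed.

End Augmentations.

Lemma leq_expn_base a c k : a <= c -> a ^ k <= c ^ k.
Proof. by case: k => // k; rewrite leq_exp2r. Qed.

(* binomial(n,k) k! = n(n-1)...(n-k+1) <= n^k. *)
Lemma bin_mul_fact_le n k : 'C(n, k) * k`! <= n ^ k.
Proof.
rewrite bin_ffact; elim: k n => // k IH n.
rewrite ffactnS expnS leq_mul2l; apply/orP; right.
exact: leq_trans (IH _) (leq_expn_base _ (leq_pred n)).
Qed.

Lemma bin_mul_bigger_fact_le n j m : j <= m -> m <= n -> 'C(n, j) * m`! <= n ^ m.
Proof.
elim: m => [|m IH]; first by rewrite leqn0 => /eqP -> _; apply: bin_mul_fact_le.
rewrite leq_eqVlt ltnS => /orP[/eqP <- _|jm mn]; first exact: bin_mul_fact_le.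
by rewrite factS mulnCA expnS leq_mul // IH // ltnW.
Qed.

Lemma sum_bin_mul_fact_le n m :
  m <= n -> (\sum_(j < m.+1) 'C(n, j)) * m`! <= m.+1 * n ^ m.
Proof.
move=> mn; rewrite big_distrl /=.
apply: leq_trans (_ : \sum_(j < m.+1) n ^ m <= _); last by rewrite sum_nat_const card_ord.
by apply: leq_sum => j _; apply: bin_mul_bigger_fact_le; rewrite // -ltnS.
Qed.

Lemma card_Splus_scaled (T : finType) (e : rel T) s j b :
  symmetric e -> j.+1 <= #|T| ->
  #|Splus e s j.+1 b| * (j`! * j`! * b`!)
    <= j.+2 * #|T| ^ j.+1 * (s ^ j * s ^ j * (s + b) ^ b).
Proof.
move=> e_sym mn.
set SC := \sum_(i < j.+2) 'C(#|T|, i).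
have count : #|Splus e s j.+1 b| <= SC * 'C(s + b, b) * 'C('C(s, 2), j).
  by apply: leq_trans (card_Splus_le e s j.+1 b) _; rewrite leq_mul2r card_Ssmb ?orbT.
have roots_fact : SC * j`! <= j.+2 * #|T| ^ j.+1.
  exact: leq_trans (leq_mul (leqnn SC) (leq_fact (leqnSn j))) (sum_bin_mul_fact_le mn).
have pairs_fact : 'C('C(s, 2), j) * j`! <= s ^ j * s ^ j.
  rewrite -expnMn; apply: leq_trans (bin_mul_fact_le _ _) (leq_expn_base _ _).
  by apply: leq_trans (bin_mul_fact_le s 2); rewrite leq_pmulr.
have grow_fact := bin_mul_fact_le (s + b) b.
have bound := leq_mul (leq_mul roots_fact pairs_fact) grow_fact.
apply: leq_trans (leq_mul count (leqnn (j`! * j`! * b`!))) _.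
move: bound; move: (j.+2 * _) (s ^ j) ((s + b) ^ b) => c x y; nia.
Qed.

Lemma INR_muln a c : INR (a * c) = (INR a * INR c)%R.
Proof. exact: mult_INR. Qed.

Lemma INR_addn a c : INR (a + c) = (INR a + INR c)%R.
Proof. exact: plus_INR. Qed.

Lemma INR_expn a k : INR (a ^ k) = pow (INR a) k.
Proof. by elim: k => // k IH; rewrite expnS INR_muln IH. Qed.

Lemma factorial_fact k : k`! = fact k.
Proof. by elim: k => // k IH; rewrite factS IH. Qed.

Theorem mainTheorem12 :
  exists C : R,
  forall (T : finType) (e : rel T),
    symmetric e -> irreflexive e ->
  forall (delta : R), (0 < delta)%R -> (delta <= 1 / 2)%R ->
  forall s m b : nat, (0 < s)%N -> (0 < m)%N -> (0 < b)%N ->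
    (m <= b)%N -> (INR b <= delta * INR s)%R ->
    (INR #|Splus e s m b|
       <= pow (INR #|T|) m * exp (C * delta * ln (1 / delta) * INR s))%R.
Proof.
exists 13%R => T e e_sym _ delta hd hd2 s m b _ m_gt0 _ hmb hbs.
have [->|N_gt0] := posnP #|Splus e s m b|.
  by apply: Rmult_le_pos; [apply/pow_le/pos_INR | left; apply: exp_pos].
have bs : b <= s.
  by apply/leP/INR_le; have := pos_INR s; nra.
have mn : m <= #|T| := leq_trans hmb (leq_trans bs (Splus_size N_gt0)).
case: m m_gt0 hmb mn N_gt0 => // j _ hmb mn _.
apply: (real_bound _ _ _ _ j b) => //; first exact: pos_INR.
have := le_INR _ _ (leP (card_Splus_scaled s b e_sym mn)).
by rewrite !(INR_muln, INR_expn, INR_addn, factorial_fact).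
Qed.
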